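(* Let $P$ be a poset. Then $P$ is the colimit in $\mathbf{Pos}$ of each of the following inclusion functors: (i) $\mathbf{pmCh}_P\to\mathbf{Pos}$; (ii) $\mathbf{mCh}_P\to\mathbf{Pos}$.
   Context: $\mathbf{Pos}$ is the category of posets and order-preserving maps; $\mathbf{Pos}_{in}$ its wide subcategory of order-preserving inclusions. A chain of $P$ is a totally ordered sub-poset. $\mathbf{pmCh}_P$ is the subcategory of $\mathbf{Pos}_{in}$ consisting of the maximal chains of $P$ together with their pairwise pullbacks in $\mathbf{Pos}$ (the full sub-posets $C_1\cap C_2$ of $P$ for maximal chains $C_1,C_2$) and the inclusions between them. A chain quasi-pullback of two chains $C_1,C_2$ of $P$ is a chain $C_{12}$ with inclusions $C_{12}\to C_1$, $C_{12}\to C_2$ such that every chain $C'$ included in both $C_1$ and $C_2$ is included in $C_{12}$; these are exactly the maximal chains of $C_1\cap C_2$. $\mathbf{mCh}_P$ is the completion, under chain quasi-pullbacks, of the discrete subcategory of $\mathbf{Pos}_{in}$ consisting of the maximal chains of $P$ (with the resulting inclusions); it is a subcategory of the category of chains of $P$ and inclusions. *)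

Record poset := Poset {
  car :> Type;
  le : car -> car -> Prop;
  le_refl : forall x, le x x;
  le_antisym : forall x y, le x y -> le y x -> x = y;
  le_trans : forall x y z, le x y -> le y z -> le x z
}.
Arguments le {p} _ _.

(* Sub-posets of P are given by predicates S; the sub-poset is the
   subtype {x | S x} with the order induced from P (full sub-poset). *)
Definition subset_of {P : poset} (S T : P -> Prop) : Prop :=
  forall x, S x -> T x.

Definition chain {P : poset} (S : P -> Prop) : Prop :=
  forall x y, S x -> S y -> le x y \/ le y x.

Definition maximal_chain {P : poset} (S : P -> Prop) : Prop :=
  chain S /\ forall T, chain T -> subset_of S T -> subset_of T S.

Definition chain_quasi_pullback {P : poset} (C1 C2 C : P -> Prop) : Prop :=
  chain C /\ subset_of C C1 /\ subset_of C C2 /\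
  forall T, chain T -> subset_of T C1 -> subset_of T C2 ->
    subset_of C T -> subset_of T C.

Definition pmCh_obj (P : poset) (S : P -> Prop) : Prop :=
  maximal_chain S \/
  exists C1 C2, maximal_chain C1 /\ maximal_chain C2 /\
    forall x, S x <-> (C1 x /\ C2 x).

Inductive mCh_obj (P : poset) : (P -> Prop) -> Prop :=
| mCh_max : forall S, maximal_chain S -> mCh_obj P S
| mCh_qpb : forall C1 C2 C, mCh_obj P C1 -> mCh_obj P C2 ->
    chain_quasi_pullback C1 C2 C -> mCh_obj P C.

Definition sub_monotone {P Q : poset} (S : P -> Prop)
  (f : {x : P | S x} -> Q) : Prop :=
  forall x y : {x : P | S x}, le (proj1_sig x) (proj1_sig y) ->
    le (f x) (f y).

Definition monotone {P Q : poset} (g : P -> Q) : Prop :=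
  forall x y, le x y -> le (g x) (g y).

(* P, with the inclusion maps, is the colimit in Pos of the inclusion
   functor from the category whose objects are the sub-posets S of P
   with [Obj S] and whose morphisms are all inclusions between them:
   every cocone (compatible family of order-preserving maps) factors
   uniquely through an order-preserving map P -> Q. *)
Definition is_colimit_of_inclusions (P : poset) (Obj : (P -> Prop) -> Prop)
  : Prop :=
  forall (Q : poset) (f : forall S, Obj S -> {x : P | S x} -> Q),
    (forall S (hS : Obj S), sub_monotone S (f S hS)) ->
    (forall S T (hS : Obj S) (hT : Obj T) (hST : subset_of S T)
        x (hx : S x),
        f S hS (exist _ x hx) = f T hT (exist _ x (hST x hx))) ->
    exists! g : P -> Q, monotone g /\
      forall S (hS : Obj S) x (hx : S x), g x = f S hS (exist _ x hx).

From mathcomp Require Import ssreflect ssrfun boolp classical_sets.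

(* Every point, and every comparable pair, of P lies in a maximal chain
   (Hausdorff maximal principle), and two maximal chains through a common
   point meet in an object of the diagram.  Hence the legs of a cocone agree
   wherever their domains overlap, glue to a single map P -> Q, and this map
   is monotone because each relation x <= y already lives inside one maximal
   chain. *)

Local Open Scope classical_set_scope.

Lemma sub_chain {P : poset} (S T : P -> Prop) :
  subset_of S T -> chain T -> chain S.
Proof. by move=> sST chT x y Sx Sy; apply: chT; apply: sST. Qed.

Lemma ex_maximal_chain_superset {P : poset} (C : P -> Prop) :
  chain C -> exists M, maximal_chain M /\ subset_of C M.
Proof.
move=> chC.
(* The family must contain the empty union, hence the sets X with C `|` X a
   chain rather than the chains containing C. *)
have [|A [chCA maxA]] := @Zorn_bigcup P (fun X => chain (C `|` X)).
  move=> F sFP totF x y [Cx|[X FX Xx]] [Cy|[Y FY Yy]].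
  - exact: chC.
  - by apply: (sFP Y FY); [left | right].
  - by apply: (sFP X FX); [right | left].
  - have [sXY|sYX] := totF X Y FX FY.
    + by apply: (sFP Y FY); right; [apply: sXY |].
    + by apply: (sFP X FX); right; [| apply: sYX].
exists (C `|` A); split; last by move=> x; left.
split=> [|T chT sMT x Tx]; first exact: chCA.
apply: contrapT => notMx; apply: (maxA T).
  split=> [z Az | sTA]; first by apply: sMT; right.
  by apply: notMx; right; apply: sTA.
by apply: sub_chain chT => z [Cz|Tz] //; apply: sMT; left.
Qed.

Lemma ex_maximal_chain_through {P : poset} (x : P) :
  exists M, maximal_chain M /\ M x.
Proof.
have [|M [maxM sxM]] := @ex_maximal_chain_superset P (eq^~ x).
  by move=> a b -> ->; left; apply: le_refl.
by exists M; split=> //; apply: sxM.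
Qed.

Lemma ex_maximal_chain_through_le {P : poset} {x y : P} :
  le x y -> exists M, maximal_chain M /\ M x /\ M y.
Proof.
move=> xy.
have [|M [maxM sxyM]] := @ex_maximal_chain_superset P (fun z => z = x \/ z = y).
  by move=> a b [] -> [] ->; auto using le_refl.
by exists M; split=> //; split; apply: sxyM; [left | right].
Qed.

Lemma chain_quasi_pullback_meet {P : poset} (C1 C2 : P -> Prop) :
  chain C1 -> chain_quasi_pullback C1 C2 (fun x => C1 x /\ C2 x).
Proof.
move=> chC1; split; last split; last split.
- by apply: sub_chain chC1 => x [].
- by move=> x [].
- by move=> x [].
- by move=> T _ sTC1 sTC2 _ x Tx; split; [apply: sTC1 | apply: sTC2].
Qed.

Section ColimitOfMaximalChains.

Variables (P : poset) (Obj : (P -> Prop) -> Prop).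

Hypothesis Obj_maximal : forall {M}, maximal_chain M -> Obj M.
Hypothesis Obj_sub_maximal :
  forall {S}, Obj S -> exists M, maximal_chain M /\ subset_of S M.
Hypothesis Obj_meet : forall {M1 M2}, maximal_chain M1 -> maximal_chain M2 ->
  Obj (fun x => M1 x /\ M2 x).

Section Cocone.

Variables (Q : poset) (f : forall S, Obj S -> {x : P | S x} -> Q).

Hypothesis f_compat : forall S T (hS : Obj S) (hT : Obj T)
  (hST : subset_of S T) x (hx : S x),
  f S hS (exist _ x hx) = f T hT (exist _ x (hST x hx)).

Lemma cocone_compat {S T} (hS : Obj S) (hT : Obj T) :
  subset_of S T -> forall x (hx : S x) (hx' : T x),
  f S hS (exist _ x hx) = f T hT (exist _ x hx').
Proof.
move=> sST x hx hx'; rewrite (Prop_irrelevance hx' (sST x hx)).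
exact: f_compat.
Qed.

Lemma cocone_maximal_agree M1 M2 (h1 : Obj M1) (h2 : Obj M2) :
  maximal_chain M1 -> maximal_chain M2 -> forall x (hx1 : M1 x) (hx2 : M2 x),
  f M1 h1 (exist _ x hx1) = f M2 h2 (exist _ x hx2).
Proof.
move=> maxM1 maxM2 x hx1 hx2; have hI := Obj_meet maxM1 maxM2.
rewrite -(cocone_compat hI h1 (fun _ h => proj1 h) x (conj hx1 hx2) hx1).
by rewrite -(cocone_compat hI h2 (fun _ h => proj2 h) x (conj hx1 hx2) hx2).
Qed.

Definition glue (x : P) : Q :=
  let: exist M (conj maxM Mx) := cid (ex_maximal_chain_through x) in
  f M (Obj_maximal maxM) (exist _ x Mx).

Lemma glueE {S} (hS : Obj S) {x} (hx : S x) : glue x = f S hS (exist _ x hx).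
Proof.
rewrite /glue; case: cid => M [maxM Mx].
have [M' [maxM' sSM']] := Obj_sub_maximal hS.
rewrite (cocone_compat hS (Obj_maximal maxM') sSM' x hx (sSM' x hx)).
exact: cocone_maximal_agree.
Qed.

Hypothesis f_mono : forall S (hS : Obj S), sub_monotone S (f S hS).

Lemma glue_monotone : monotone glue.
Proof.
move=> x y xy; have [M [maxM [Mx My]]] := ex_maximal_chain_through_le xy.
rewrite (glueE (Obj_maximal maxM) Mx) (glueE (Obj_maximal maxM) My).
exact: f_mono.
Qed.

Lemma cocone_factor_unique (g g' : P -> Q) :
  (forall S (hS : Obj S) x (hx : S x), g x = f S hS (exist _ x hx)) ->
  (forall S (hS : Obj S) x (hx : S x), g' x = f S hS (exist _ x hx)) ->
  g = g'.
Proof.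
move=> gE g'E; apply: funext => x.
have [M [maxM Mx]] := ex_maximal_chain_through x.
by rewrite (gE _ (Obj_maximal maxM) x Mx) (g'E _ (Obj_maximal maxM) x Mx).
Qed.

Lemma cocone_unique_factorization : exists! g : P -> Q, monotone g /\
  forall S (hS : Obj S) x (hx : S x), g x = f S hS (exist _ x hx).
Proof.
exists glue; split.
- split; first exact: glue_monotone.
  by move=> S hS x hx; apply: glueE.
- by move=> g [_ gE]; apply: cocone_factor_unique gE => S hS x hx; apply: glueE.
Qed.

End Cocone.

Theorem is_colimit_of_inclusions_maximal : is_colimit_of_inclusions P Obj.
Proof. by move=> Q f f_mono f_compat; exact: cocone_unique_factorization. Qed.

End ColimitOfMaximalChains.

Lemma pmCh_obj_sub_maximal (P : poset) S :
  pmCh_obj P S -> exists M, maximal_chain M /\ subset_of S M.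
Proof.
case=> [maxS | [M1 [M2 [maxM1 [_ SE]]]]]; first by exists S; split=> // x.
by exists M1; split=> // x /SE [].
Qed.

Lemma mCh_obj_sub_maximal (P : poset) S :
  mCh_obj P S -> exists M, maximal_chain M /\ subset_of S M.
Proof.
elim=> [M maxM | C1 C2 C _ [M [maxM sC1M]] _ _ [_ [sCC1 _]]].
  by exists M; split=> // x.
by exists M; split=> // x /sCC1 /sC1M.
Qed.

Theorem proposition6p2 (P : poset) :
  is_colimit_of_inclusions P (pmCh_obj P) /\
  is_colimit_of_inclusions P (mCh_obj P).
Proof.
split; apply: is_colimit_of_inclusions_maximal.
- by move=> M maxM; left.
- exact: pmCh_obj_sub_maximal.
- by move=> M1 M2 maxM1 maxM2; right; exists M1, M2.
- exact: mCh_max.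
- exact: mCh_obj_sub_maximal.
- move=> M1 M2 maxM1 maxM2.
  apply: (mCh_qpb _ M1 M2); [exact: mCh_max | exact: mCh_max |].
  exact: chain_quasi_pullback_meet maxM1.1.
Qed.
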